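(* Let $(X,\|\cdot\|_X)$ be a Banach space, $n\in\mathbb{N}$, $\mathcal{K}\subset X$ compact and $\gamma>0$. Then there is a norm $\|\cdot\|_Y$ on $\mathbb{R}^n$ satisfying $$\max_j|y_j|\le\|y\|_Y\le\sum_{j=1}^n|y_j|\quad\text{for all } y=(y_1,\dots,y_n)\in\mathbb{R}^n,$$ such that $d_n^\gamma(\mathcal{K})_X=d^\gamma(\mathcal{K},Y)_X$.
   Context: For $k\ge1$ and a norm $\|\cdot\|_{Y_k}$ on $\mathbb{R}^k$ let $B_{Y_k}=\{y\in\mathbb{R}^k:\|y\|_{Y_k}\le1\}$. For $\mathcal{K}\subset X$ and $\gamma\ge0$, the fixed Lipschitz width is $d^\gamma(\mathcal{K},Y_k)_X=\inf_{\Phi}\sup_{f\in\mathcal{K}}\inf_{y\in B_{Y_k}}\|f-\Phi(y)\|_X$, the infimum being over all maps $\Phi:B_{Y_k}\to X$ with $\|\Phi(y)-\Phi(y')\|_X\le\gamma\|y-y'\|_{Y_k}$ for all $y,y'\in B_{Y_k}$. The Lipschitz width is $d_n^\gamma(\mathcal{K})_X=\inf_{1\le k\le n}\inf_{\|\cdot\|_{Y_k}}d^\gamma(\mathcal{K},Y_k)_X$, where the inner infimum is over all norms on $\mathbb{R}^k$. *)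

From HB Require Import structures.
From mathcomp Require Import all_boot all_order all_algebra.
From mathcomp Require Import all_classical all_reals all_analysis.
Set Implicit Arguments. Unset Strict Implicit. Unset Printing Implicit Defensive.
Import Order.TTheory GRing.Theory Num.Theory.
Import numFieldNormedType.Exports.
Local Open Scope classical_set_scope.
Local Open Scope ring_scope.

Definition is_norm (R : realType) (k : nat) (N : 'rV[R]_k -> R) : Prop :=
  [/\ forall y, 0 <= N y,
      forall y, N y = 0 -> y = 0,
      forall (a : R) y, N (a *: y) = `|a| * N y
    & forall y y', N (y + y') <= N y + N y'].

Definition unit_ball (R : realType) (k : nat) (N : 'rV[R]_k -> R) : set 'rV[R]_k :=
  [set y | N y <= 1].

Definition lip_on_ball (R : realType) (X : normedModType R) (k : nat)
    (N : 'rV[R]_k -> R) (gamma : R) (Phi : 'rV[R]_k -> X) : Prop :=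
  forall y y', unit_ball N y -> unit_ball N y' ->
    `|Phi y - Phi y'| <= gamma * N (y - y').

Definition fixed_lip_width (R : realType) (X : normedModType R) (K : set X)
    (gamma : R) (k : nat) (N : 'rV[R]_k -> R) : \bar R :=
  ereal_inf [set e | exists Phi : 'rV[R]_k -> X, lip_on_ball N gamma Phi /\
    e = ereal_sup [set s | exists2 f, K f &
          s = ereal_inf [set (`|f - Phi y|)%:E | y in unit_ball N]]].

Definition lip_width (R : realType) (X : normedModType R) (K : set X)
    (gamma : R) (n : nat) : \bar R :=
  ereal_inf [set e | exists k : nat, [/\ (1 <= k)%N, (k <= n)%N &
    exists N : 'rV[R]_k -> R, is_norm N /\ e = fixed_lip_width K gamma N]].

From HB Require Import structures.
From mathcomp Require Import all_boot all_order all_algebra.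
From mathcomp Require Import all_classical all_reals all_analysis.
From mathcomp Require Import perm finmap ring lra.
Import Order.TTheory GRing.Theory Num.Theory.
Import numFieldNormedType.Exports.
Local Open Scope classical_set_scope.
Local Open Scope ring_scope.

(* A 1-Lipschitz map P from the unit ball of one norm onto (up to c) the unit
   ball of another lets every parametrisation Phi be replaced by Phi \o P at a
   cost gamma * c in the fixed width.  Hence a norm on R^k, k <= n, can be
   extended to R^n and then put in Auerbach position (the basis given by the
   rows of a determinant-maximising matrix with rows in the unit ball), where
   it lies between the l^oo and l^1 norms, without increasing the width.
   These normalised norms are compact: along an ultrafilter they converge
   pointwise, hence, being uniformly Lipschitz, uniformly on the unit ball;
   and the width is upper semicontinuous for uniform closeness.  A cluster
   point of normalised norms of width close to d_n^gamma attains it. *)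

Section IsNorm.
Context {R : realType} {k : nat} {N : 'rV[R]_k -> R} (hN : is_norm N).

Lemma is_norm_ge0 y : 0 <= N y. Proof. by case: hN. Qed.

Lemma is_norm_eq0 y : N y = 0 -> y = 0. Proof. by case: hN => _ + _ _; apply. Qed.

Lemma is_normZ a y : N (a *: y) = `|a| * N y. Proof. by case: hN. Qed.

Lemma is_normD y y' : N (y + y') <= N y + N y'. Proof. by case: hN. Qed.

Lemma is_norm0 : N 0 = 0.
Proof. by have := is_normZ 0 0; rewrite scale0r normr0 mul0r. Qed.

Lemma is_normN y : N (- y) = N y.
Proof. by rewrite -scaleN1r is_normZ normrN normr1 mul1r. Qed.

Lemma is_norm_dist x y : `|N x - N y| <= N (x - y).
Proof.
have le_sub u v : N u - N v <= N (u - v).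
  by rewrite lerBlDr (le_trans _ (is_normD _ _)) // subrK.
by rewrite ler_norml le_sub andbT lerNl opprB -[x - y]opprB is_normN le_sub.
Qed.

Lemma is_norm_sum p (f : 'I_p -> 'rV[R]_k) :
  N (\sum_(i < p) f i) <= \sum_(i < p) N (f i).
Proof.
elim/big_rec2: _ => [|i y1 y2 _ IH]; first by rewrite is_norm0.
by apply: le_trans (is_normD _ _) _; rewrite lerD2l.
Qed.

End IsNorm.

Section MxNorm.
Context {R : realType}.

Lemma mx_norm_entry_le {m n} (x : 'M[R]_(m, n)) i j : `|x i j| <= `|x|.
Proof.
have -> : `|x| = mx_norm x by [].
by rewrite mx_normrE; apply/bigmax_geP; right; exists (i, j).
Qed.

Lemma mx_norm_le_entries {m n} (x : 'M[R]_(m, n)) c : 0 <= c ->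
  (forall i j, `|x i j| <= c) -> `|x| <= c.
Proof.
move=> c0 hx; have -> : `|x| = mx_norm x by [].
by rewrite mx_normrE; apply/bigmax_leP; split => // -[i j] _; apply: hx.
Qed.

Lemma lipschitz_continuous {V : normedModType R} (C : R) (f : V -> R) :
  (forall x y, `|f x - f y| <= C * `|x - y|) -> continuous f.
Proof.
move=> hf x; apply/cvgrPdist_lt => e e0.
have C1 : 0 < `|C| + 1 by rewrite ltr_wpDl.
near=> y; apply: le_lt_trans (hf x y) _.
apply: le_lt_trans (_ : (`|C| + 1) * `|x - y| < e).
  by rewrite ler_wpM2r // (le_trans (ler_norm C)) // lerDl.
rewrite mulrC -ltr_pdivlMr //; near: y.
by apply: (cvgr_dist_lt id x cvg_id); rewrite divr_gt0.
Unshelve. all: end_near. Qed.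

Context {n : nat} {N : 'rV[R]_n -> R} (hN : is_norm N).

Lemma is_norm_le_mx_norm : exists2 C, 0 <= C & forall x, N x <= C * `|x|.
Proof.
exists (\sum_(j < n) N (delta_mx 0 j)); first by apply: sumr_ge0 => j _; apply: is_norm_ge0.
move=> x; rewrite {1}(row_sum_delta x) mulr_suml.
apply: le_trans (is_norm_sum hN _ _) _; apply: ler_sum => j _.
by rewrite is_normZ // mulrC ler_wpM2l ?is_norm_ge0 ?mx_norm_entry_le.
Qed.

Lemma is_norm_continuous : continuous N.
Proof.
have [C _ hC] := is_norm_le_mx_norm.
by apply: (lipschitz_continuous C) => x y; apply: le_trans (is_norm_dist hN x y) _.
Qed.

Lemma is_norm_ge_mx_norm : (0 < n)%N -> exists2 c, 0 < c & forall x, c * `|x| <= N x.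
Proof.
move=> n0; pose S := [set x : 'rV[R]_n | `|x| = 1].
have cS : compact S.
  apply: bounded_closed_compact.
    by exists 1; split => // M M1 x /= ->; apply: ltW.
  rewrite (_ : S = Num.norm @^-1` [set r | r = 1]) //.
  by apply: preimage_closed => [x _|]; [exact: norm_continuous | exact: closed_eq].
have S1 : S (const_mx 1).
  apply/eqP; rewrite eq_le; apply/andP; split.
    by apply: mx_norm_le_entries => // i j; rewrite mxE normr1.
  by have := mx_norm_entry_le (const_mx 1 : 'rV[R]_n) 0 (Ordinal n0); rewrite mxE normr1.
have [x0 /set_mem Sx0 hx0] := EVT_min_rV (ex_intro _ _ S1) cS
  (continuous_subspaceT is_norm_continuous).
exists (N x0).
  rewrite lt_def is_norm_ge0 // andbT; apply/eqP => /(is_norm_eq0 hN) x00.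
  by move: Sx0; rewrite /S /= x00 normr0 => /eqP; rewrite eq_sym oner_eq0.
move=> x; have [->|x_neq0] := eqVneq x 0; first by rewrite normr0 mulr0 is_norm_ge0.
have x_gt0 : 0 < `|x| by rewrite normr_gt0.
have Sx : S (`|x|^-1 *: x) by rewrite /S /= normrZ normfV normr_id mulVf ?gt_eqF.
have := hx0 _ (mem_set Sx); rewrite is_normZ // normfV normr_id.
by rewrite ler_pdivlMl // mulrC.
Qed.

End MxNorm.

Lemma det_row_replace {F : comRingType} {n} (M : 'M[F]_n) (x : 'rV[F]_n) i :
  \det (\matrix_(a, b) if a == i then x 0 b else M a b) = (x *m \adj M) 0 i.
Proof.
rewrite (expand_det_row _ i) mxE; apply: eq_bigr => j _.
rewrite !mxE eqxx; congr (_ * _).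
rewrite /cofactor; congr (_ * \det _); apply/matrixP => a b; rewrite !mxE.
by rewrite eq_sym (negbTE (neq_lift _ _)).
Qed.

Section Auerbach.
Context {R : realType}.

Definition linf_norm {n} (y : 'rV[R]_n) := \big[Num.max/0]_(j < n) `|y ord0 j|.

Definition l1_norm {n} (y : 'rV[R]_n) := \sum_(j < n) `|y ord0 j|.

Definition normalized_norm {n} (N : 'rV[R]_n -> R) :=
  is_norm N /\ forall y, linf_norm y <= N y /\ N y <= l1_norm y.

Lemma mx_norm_row_vec_mx_le {n} (v : 'rV[R]_(n * n)) i : `|row i (vec_mx v)| <= `|v|.
Proof. by apply: mx_norm_le_entries => // a j; rewrite !mxE mx_norm_entry_le. Qed.

Lemma det_vec_mx_continuous n : continuous (fun v : 'rV[R]_(n * n) => \det (vec_mx v)).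
Proof.
have -> : (fun v : 'rV[R]_(n * n) => \det (vec_mx v)) =
    (fun v => \sum_(s : 'S_n) ((-1) ^+ s * \prod_(i < n) v 0 (mxvec_index i (s i)))).
  apply: funext => v; apply: eq_bigr => s _.
  by congr (_ * _); apply: eq_bigr => i _; rewrite mxE.
apply: continuous_big => [|s _ v]; first exact: add_continuous.
have prod_continuous :
    continuous (fun v : 'rV[R]_(n * n) => \prod_(i < n) v 0 (mxvec_index i (s i))).
  by apply: continuous_big => [|i _]; [exact: mul_continuous | exact: coord_continuous].
exact: cvgMl_tmp (prod_continuous v).
Qed.

Context {n : nat} {N : 'rV[R]_n -> R} (hN : is_norm N).

Lemma is_norm_mulmx (M : 'M[R]_n) : M \in unitmx -> is_norm (fun y => N (y *m M)).
Proof.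
move=> Mu; split=> [y|y /(is_norm_eq0 hN) yM0|a y|y y'].
- exact: is_norm_ge0.
- by rewrite -(mulmxK Mu y) yM0 mul0mx.
- by rewrite -scalemxAl is_normZ.
- by rewrite mulmxDl is_normD.
Qed.

Lemma exists_max_det_rows : (0 < n)%N ->
  exists M : 'M[R]_n, [/\ forall i, N (row i M) <= 1, 0 < \det M &
    forall M', (forall i, N (row i M') <= 1) -> \det M' <= \det M].
Proof.
move=> n0; have [C C0 hC] := is_norm_le_mx_norm hN.
have [c c0 hc] := is_norm_ge_mx_norm hN n0.
pose row_norm i (v : 'rV[R]_(n * n)) := N (row i (vec_mx v)).
pose A := \bigcap_(i in [set: 'I_n]) (row_norm i @^-1` [set r | r <= 1]).
have row_continuous i : continuous (row_norm i).
  apply: (lipschitz_continuous C) => v w.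
  apply: le_trans (is_norm_dist hN _ _) _.
  have -> : row i (vec_mx v) - row i (vec_mx w) = row i (vec_mx (v - w)).
    by apply/rowP => j; rewrite !mxE.
  by apply: le_trans (hC _) _; rewrite ler_wpM2l ?mx_norm_row_vec_mx_le.
have cA : compact A.
  apply: bounded_closed_compact.
    exists c^-1; split=> [|b b_gt v Av]; first exact: num_real.
    apply: le_trans (ltW b_gt).
    apply: mx_norm_le_entries => [|a k]; first by rewrite invr_ge0 ltW.
    rewrite (ord1 a); case/mxvec_indexP: k => i j.
    have -> : v 0 (mxvec_index i j) = row i (vec_mx v) 0 j by rewrite !mxE.
    apply: le_trans (mx_norm_entry_le _ 0 j) _.
    by rewrite -[c^-1]mulr1 ler_pdivlMl // (le_trans (hc _) (Av i I)).
  apply: closed_bigI => i _.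
  by apply: preimage_closed => [v _|]; [exact: row_continuous | exact: closed_le].
pose r := (C + 1)^-1.
have r_gt0 : 0 < r by rewrite invr_gt0 ltr_wpDl.
have A_r : A (mxvec r%:M).
  move=> i _; rewrite /preimage /row_norm /= mxvecK; apply: le_trans (hC _) _.
  apply: le_trans (_ : C * r <= 1); last by rewrite mulrC ler_pdivrMl ?ltr_wpDl // mulr1 lerDl.
  rewrite ler_wpM2l //; apply: mx_norm_le_entries => [|a b]; first exact: ltW.
  by rewrite !mxE; case: (i == b); rewrite ?mulr1n ?mulr0n ?normr0 ?gtr0_norm // ltW.
have [vM /set_mem A_vM max_vM] := EVT_max_rV (ex_intro _ _ A_r) cA
  (continuous_subspaceT (@det_vec_mx_continuous n)).
exists (vec_mx vM); split=> [i||M' M'_rows].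
- exact: A_vM i I.
- have := max_vM _ (mem_set A_r); rewrite mxvecK det_scalar.
  by apply: lt_le_trans; rewrite exprn_gt0.
- rewrite -[M']mxvecK; apply/max_vM/mem_set => i _.
  by rewrite /preimage /row_norm /= mxvecK M'_rows.
Qed.

(* Cramer's rule: replacing row [i] of [M] by [z *m M] multiplies [\det M] by [z 0 i]. *)
Lemma max_det_coord_le (M : 'M[R]_n) : (forall i, N (row i M) <= 1) -> 0 < \det M ->
    (forall M', (forall i, N (row i M') <= 1) -> \det M' <= \det M) ->
  forall (z : 'rV[R]_n) i, `|z 0 i| <= N (z *m M).
Proof.
move=> M_rows detM_gt0 M_max z i.
have coord_le1 w : N (w *m M) <= 1 -> w 0 i <= 1.
  move=> wM_le1.
  pose M' := \matrix_(a, b) if a == i then (w *m M) 0 b else M a b.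
  have : \det M' <= \det M.
    apply: M_max => a; have [->|ai] := eqVneq a i.
      by rewrite (_ : row i M' = w *m M) //; apply/rowP => b; rewrite !mxE eqxx.
    by rewrite (_ : row a M' = row a M) //; apply/rowP => b; rewrite !mxE (negbTE ai).
  rewrite det_row_replace -mulmxA mul_mx_adj mul_mx_scalar mxE.
  by rewrite -[X in _ <= X]mulr1 ler_pM2l.
have Mu : M \in unitmx by rewrite unitmxE unitfE gt_eqF.
have [zM0|zM_neq0] := eqVneq (z *m M) 0.
  by rewrite -(mulmxK Mu z) zM0 mul0mx mxE normr0 is_norm_ge0.
have t_gt0 : 0 < N (z *m M).
  by rewrite lt_def is_norm_ge0 // andbT (contra_neq (is_norm_eq0 hN _) zM_neq0).
pose w := (N (z *m M))^-1 *: z.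
have NwM : N (w *m M) = 1.
  by rewrite -scalemxAl is_normZ // normfV gtr0_norm // mulVf ?gt_eqF.
have : `|w 0 i| <= 1.
  rewrite ler_norml coord_le1 ?NwM // andbT lerNl.
  by have := coord_le1 (- w); rewrite mulNmx is_normN // NwM mxE => ->.
by rewrite mxE normrZ normfV gtr0_norm // mulrC ler_pdivrMr // mul1r.
Qed.

Lemma auerbach : (0 < n)%N ->
  exists2 M : 'M[R]_n, M \in unitmx & normalized_norm (fun y => N (y *m M)).
Proof.
move=> n0; have [M [M_rows detM_gt0 M_max]] := exists_max_det_rows n0.
have Mu : M \in unitmx by rewrite unitmxE unitfE gt_eqF.
exists M => //; split=> [|y]; first exact: is_norm_mulmx.
split; first by apply/bigmax_leP; split=> [|i _]; rewrite ?is_norm_ge0 ?max_det_coord_le.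
rewrite mulmx_sum_row; apply: le_trans (is_norm_sum hN _ _) _.
by apply: ler_sum => i _; rewrite is_normZ // ler_piMr.
Qed.

End Auerbach.

Lemma is_norm_mulmx_add {R : realType} {k l n} (N : 'rV[R]_k -> R)
    (A : 'M[R]_(n, k)) (B : 'M[R]_(n, l)) :
  is_norm N -> (forall y : 'rV[R]_n, y *m A = 0 -> y *m B = 0 -> y = 0) ->
  is_norm (fun y => N (y *m A) + `|y *m B|).
Proof.
move=> hN AB_inj; split=> [y|y /eqP|a y|y y'].
- by rewrite addr_ge0 ?(is_norm_ge0 hN).
- rewrite paddr_eq0 ?(is_norm_ge0 hN) // normr_eq0 => /andP[/eqP yA0 /eqP].
  exact: AB_inj (is_norm_eq0 hN _ yA0).
- by rewrite -!scalemxAl is_normZ // normrZ mulrDr.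
- by rewrite !mulmxDl addrACA lerD ?(is_normD hN) ?ler_normD.
Qed.

Definition norm_close {R : realType} {n} (eta : R) (N N' : 'rV[R]_n -> R) :=
  forall y, N' y <= (1 + eta) * N y /\ (1 - eta) * N y <= N' y.

Section FixedLipWidth.
Context {R : realType} {X : normedModType R} (K : set X) {gamma : R}.
Hypothesis gamma_ge0 : 0 <= gamma.

Lemma fixed_lip_width_transfer {k1 k2} (N1 : 'rV[R]_k1 -> R) (N2 : 'rV[R]_k2 -> R)
    (P : 'rV[R]_k2 -> 'rV[R]_k1) (c : R) : 0 <= c ->
  (forall y, unit_ball N2 y -> unit_ball N1 (P y)) ->
  (forall y y', unit_ball N2 y -> unit_ball N2 y' -> N1 (P y - P y') <= N2 (y - y')) ->
  (forall z, unit_ball N1 z -> exists2 y, unit_ball N2 y & N1 (P y - z) <= c) ->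
  (fixed_lip_width K gamma N2 <= fixed_lip_width K gamma N1 + (gamma * c)%:E)%E.
Proof.
move=> c_ge0 P_ball P_lip P_dense.
rewrite /fixed_lip_width -leeBlDr //; apply: le_ereal_inf_tmp => _ [Phi [Phi_lip ->]].
rewrite leeBlDr //; apply: ereal_inf_le.
exists (ereal_sup [set s | exists2 f, K f &
  s = ereal_inf [set (`|f - (Phi \o P) y|)%:E | y in unit_ball N2]]).
  exists (Phi \o P); split=> // y y' By By' /=.
  apply: le_trans (Phi_lip _ _ (P_ball _ By) (P_ball _ By')) _.
  by rewrite ler_wpM2l // P_lip.
apply: ge_ereal_sup => _ [f Kf ->].
apply: (@le_trans _ _ (ereal_inf [set (`|f - Phi z|)%:E | z in unit_ball N1]
  + (gamma * c)%:E)%E); last by apply: leeD2r; apply: ereal_sup_ubound; exists f.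
rewrite -leeBlDr //; apply: le_ereal_inf_tmp => _ [z Bz <-]; rewrite leeBlDr //.
have [y By Pyz] := P_dense z Bz.
apply: ereal_inf_le; exists (`|f - Phi (P y)|)%:E; first by exists y.
rewrite -EFinD lee_fin -[f - _](subrKA (Phi z)).
apply: le_trans (ler_normD _ _) _; rewrite lerD2l distrC.
by apply: le_trans (Phi_lip _ _ (P_ball _ By) Bz) _; rewrite ler_wpM2l.
Qed.

Lemma fixed_lip_width_mulmx_le {k1 k2} (N1 : 'rV[R]_k1 -> R) (N2 : 'rV[R]_k2 -> R)
    (A : 'M[R]_(k2, k1)) : is_norm N1 ->
  (forall y, N1 (y *m A) <= N2 y) ->
  (forall z, unit_ball N1 z -> exists2 y, unit_ball N2 y & y *m A = z) ->
  (fixed_lip_width K gamma N2 <= fixed_lip_width K gamma N1)%E.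
Proof.
move=> hN1 A_le A_onto.
have := fixed_lip_width_transfer N1 N2 (fun y => y *m A) 0 (lexx 0).
rewrite mulr0 adde0; apply=> [y|y y' _ _|z /A_onto[y By <-]].
- exact: le_trans (A_le y).
- by rewrite -mulmxBl A_le.
- by exists y; rewrite // subrr is_norm0.
Qed.

Lemma fixed_lip_width_widen {k n} (N : 'rV[R]_k -> R) : (k <= n)%N -> is_norm N ->
  exists2 N' : 'rV[R]_n -> R, is_norm N' &
    (fixed_lip_width K gamma N' <= fixed_lip_width K gamma N)%E.
Proof.
move=> kn hN; pose P : 'M[R]_(n, k) := pid_mx k; pose Q : 'M[R]_(k, n) := pid_mx k.
have QP : Q *m P = 1%:M by rewrite mul_pid_mx minnn (minn_idPr kn) pid_mx_1.
pose B := 1%:M - P *m Q.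
have PB_inj (y : 'rV[R]_n) : y *m P = 0 -> y *m B = 0 -> y = 0.
  by move=> yP0; rewrite mulmxBr mulmx1 mulmxA yP0 mul0mx subr0.
exists (fun y => N (y *m P) + `|y *m B|); first exact: is_norm_mulmx_add hN PB_inj.
apply: (fixed_lip_width_mulmx_le N _ P hN) => [y|z Bz]; first by rewrite lerDl.
exists (z *m Q); last by rewrite -mulmxA QP mulmx1.
rewrite /unit_ball /= -mulmxA QP mulmx1 mulmxBr mulmx1 mulmxA -(mulmxA z) QP.
by rewrite mulmx1 subrr normr0 addr0.
Qed.

Lemma fixed_lip_width_le_close e : 0 < e -> exists2 eta : R, 0 < eta &
  forall n (N N' : 'rV[R]_n -> R), is_norm N -> is_norm N' -> norm_close eta N N' ->
    (fixed_lip_width K gamma N <= fixed_lip_width K gamma N' + e%:E)%E.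
Proof.
move=> e_gt0; pose eta := e / (2 * (gamma + e)).
have ge_gt0 : 0 < gamma + e by rewrite ltr_wpDl.
have eta_gt0 : 0 < eta by rewrite divr_gt0 ?mulr_gt0.
have eta_lt1 : eta < 1.
  by rewrite ltr_pdivrMr ?mulr_gt0 // mul1r; have := gamma_ge0; lra.
have eta1_gt0 : 0 < 1 + eta by rewrite addr_gt0.
exists eta => // n N N' hN hN' close.
have scale_le y : N' ((1 + eta)^-1 *: y) <= N y.
  by rewrite is_normZ // gtr0_norm ?invr_gt0 // ler_pdivrMl // (close y).1.
apply: le_trans (leeD2l _ (_ : (gamma * (2 * eta))%:E <= e%:E)%E).
  apply: (fixed_lip_width_transfer N' N (fun y => (1 + eta)^-1 *: y)) => [|y By|y y' _ _|z Bz].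
  - by rewrite mulr_ge0 // ltW.
  - exact: le_trans (scale_le y) By.
  - by rewrite -scalerBr scale_le.
  exists ((1 - eta) *: z).
    rewrite /unit_ball /= is_normZ // ger0_norm ?subr_ge0 ?(ltW eta_lt1) //.
    exact: le_trans (close z).2 Bz.
  rewrite scalerA -[X in _ - X]scale1r -scalerBl is_normZ //.
  have -> : (1 + eta)^-1 * (1 - eta) - 1 = - (2 * eta / (1 + eta)).
    by field; rewrite gt_eqF.
  have c_ge0 : 0 <= 2 * eta / (1 + eta) by apply: divr_ge0; lra.
  rewrite normrN ger0_norm //.
  apply: le_trans (_ : 2 * eta / (1 + eta) <= _).
    by rewrite -[X in _ <= X]mulr1 ler_wpM2l.
  by rewrite ler_pdivrMr // ler_peMr ?lerDl; lra.
have -> : gamma * (2 * eta) = e * (gamma / (gamma + e)) by rewrite /eta; field; rewrite gt_eqF.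
by rewrite lee_fin ler_piMr ?(ltW e_gt0) // ler_pdivrMr // mul1r lerDl ltW.
Qed.

End FixedLipWidth.

Lemma ultra_cvg_itv {R : realType} {I : Type} (U : set_system I) (u : I -> R) (a b : R) :
  UltraFilter U -> (\forall i \near U, a <= u i <= b) -> exists p : R, u @ U --> p.
Proof.
move=> UU u_ab.
have U_ab : (u @ U) `[a, b]%classic by apply: filterS u_ab => i; rewrite /= in_itv.
have [p [_ clp]] := @segment_compact R a b (u @ U) _ U_ab.
exists p => B /= Bp; case: (in_ultra_setVsetC (u @^-1` B) UU) => // UBC.
by have [r [/= notBr Br]] := clp (~` B) B UBC Bp.
Qed.

Section NormalizedNormCompact.
Context {R : realType} {n : nat}.
Implicit Types (y : 'rV[R]_n) (N : 'rV[R]_n -> R).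

Lemma linf_norm_ge y j : `|y ord0 j| <= linf_norm y.
Proof. by apply/bigmax_geP; right; exists j. Qed.

Lemma mx_norm_le_linf_norm y : `|y| <= linf_norm y.
Proof.
apply: mx_norm_le_entries => [|i j]; first by apply/bigmax_geP; left.
by rewrite (ord1 i) linf_norm_ge.
Qed.

Lemma l1_norm_le_mx_norm y : l1_norm y <= n%:R * `|y|.
Proof.
apply: le_trans (_ : \sum_(j < n) `|y| <= _).
  by apply: ler_sum => j _; apply: mx_norm_entry_le.
by rewrite sumr_const card_ord mulr_natl.
Qed.

Lemma normalized_norm_dist {N} x y : normalized_norm N -> `|N x - N y| <= n%:R * `|x - y|.
Proof.
move=> [hN N_bounds]; apply: le_trans (is_norm_dist hN x y) _.
exact: le_trans (N_bounds _).2 (l1_norm_le_mx_norm _).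
Qed.

Section Limit.
Context {U : set_system ('rV[R]_n -> R)} {U_proper : ProperFilter U} {N : 'rV[R]_n -> R}.
Hypotheses (U_normalized : \forall N' \near U, normalized_norm N')
  (cvgN : forall y, (fun N' => N' y) @ U --> N y).

Lemma normalized_norm_limit : normalized_norm N.
Proof.
have N_bounds y : linf_norm y <= N y /\ N y <= l1_norm y.
  split; [apply: (cvgr_to_ge (cvgN y)) | apply: (cvgr_to_le (cvgN y))];
    by apply: filterS U_normalized => N' [_ /(_ y)[]].
have NZ a y : N (a *: y) = `|a| * N y.
  apply: (cvg_unique _ (cvgN (a *: y))); first exact: norm_hausdorff.
  apply: cvg_trans (cvgMl_tmp (cvgN y)).
  by apply: near_eq_cvg; apply: filterS U_normalized => N' [hN' _]; rewrite /= is_normZ.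
have ND y y' : N (y + y') <= N y + N y'.
  rewrite -subr_ge0; apply: (cvgr_to_ge (cvgB (cvgD (cvgN y) (cvgN y')) (cvgN (y + y')))).
  by apply: filterS U_normalized => N' [hN' _]; rewrite /= subr_ge0 is_normD.
have N_ge0 y : 0 <= N y by apply: le_trans (N_bounds y).1; apply/bigmax_geP; left.
have N_eq0 y : N y = 0 -> y = 0.
  move=> Ny0; apply/rowP => j; apply/eqP; rewrite mxE -normr_le0 -Ny0.
  exact: le_trans (linf_norm_ge y j) (N_bounds y).1.
by split=> //; split.
Qed.

Lemma normalized_norm_limit_close eta : 0 < eta -> \forall N' \near U, norm_close eta N N'.
Proof.
move=> eta_gt0; have [hN N_bounds] := normalized_norm_limit.
pose d := eta / (2 * n%:R + 1).
have d_gt0 : 0 < d by apply: divr_gt0 => //; have := ler0n R n; lra.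
pose S := [set x : 'rV[R]_n | `|x| <= 1].
have cS : compact S.
  apply: bounded_closed_compact.
    by exists 1; split=> // b b_gt1 x /= Sx; apply: le_trans Sx (ltW b_gt1).
  rewrite (_ : S = Num.norm @^-1` [set r | r <= 1]) //.
  by apply: preimage_closed => [x _|]; [exact: norm_continuous | exact: closed_le].
move: cS; rewrite compact_cover => /(_ _ S (fun g => ball g d)) [].
- by move=> g _; exact: ball_open.
- by move=> x Sx; exists x => //; exact: ballxx.
move=> D _ D_cover.
have U_net : \forall N' \near U, forall g, [set` D] g -> `|N g - N' g| < d.
  apply: filterS (@filter_bigI _ _ D (fun g => [set N' | `|N g - N' g| < d]) U _
    (fun g _ => cvgr_dist_lt _ _ (cvgN g) _ d_gt0)).
  by move=> N' + g Dg; apply.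
apply: filterS (filterI U_normalized U_net) => N' [[hN' N'_bounds] net].
have close_S x : `|x| <= 1 -> `|N' x - N x| <= eta.
  move=> Sx; have [g Dg] := D_cover x Sx; rewrite -ball_normE /ball_ /= => gx_d.
  have N'd := normalized_norm_dist x g (conj hN' N'_bounds); rewrite [X in _ * X]distrC in N'd.
  have Nd := normalized_norm_dist g x (conj hN N_bounds).
  have net_g := net g Dg; rewrite distrC in net_g.
  have nd : n%:R * `|g - x| <= n%:R * d by rewrite ler_wpM2l // ltW.
  have -> : eta = (2 * n%:R + 1) * d by rewrite /d mulrC divfK //; have := ler0n R n; lra.
  have : `|N' x - N x| <= `|N' x - N' g| + `|N' g - N g| + `|N g - N x|.
    have -> : N' x - N x = (N' x - N' g) + (N' g - N g) + (N g - N x) by ring.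
    by apply: le_trans (ler_normD _ _) _; rewrite lerD2r ler_normD.
  lra.
move=> y; have yN : `|y| <= N y := le_trans (mx_norm_le_linf_norm y) (N_bounds y).1.
have : `|N' y - N y| <= eta * N y.
  apply: le_trans (_ : eta * `|y| <= _); last by rewrite ler_wpM2l // ltW.
  have [->|y_neq0] := eqVneq y 0.
    by rewrite (is_norm0 hN) (is_norm0 hN') subrr !normr0 mulr0.
  have y_gt0 : 0 < `|y| by rewrite normr_gt0.
  have := close_S (`|y|^-1 *: y).
  rewrite normrZ (is_normZ hN) (is_normZ hN') -mulrBr normrM !normfV !normr_id.
  by rewrite mulVf ?gt_eqF // ler_pdivrMl // mulrC => /(_ (lexx 1)).
by rewrite ler_norml => /andP[lb ub]; split; lra.
Qed.

End Limit.

Lemma normalized_norm_cluster {F : set_system ('rV[R]_n -> R)} : ProperFilter F ->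
    (\forall N' \near F, normalized_norm N') ->
  exists N, normalized_norm N /\
    forall eta, 0 < eta -> forall A, F A -> exists2 N', A N' & norm_close eta N N'.
Proof.
move=> F_proper F_normalized; have [U [U_ultra FU]] := ultraFilterLemma F_proper.
have U_normalized := FU _ F_normalized.
have /choice [N cvgN] : forall y, exists p : R, (fun N' => N' y) @ U --> p.
  move=> y; apply: (ultra_cvg_itv _ _ 0 (l1_norm y) U_ultra); apply: filterS U_normalized.
  move=> N' [hN' /(_ y)[lb ->]]; rewrite andbT.
  by apply: le_trans lb; apply/bigmax_geP; left.
exists N; split=> [|eta eta_gt0 A FA]; first exact: normalized_norm_limit U_normalized cvgN.
have [N' [AN' closeN']] := filter_ex (filterI (FU _ FA)
  (normalized_norm_limit_close U_normalized cvgN _ eta_gt0)).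
by exists N'.
Qed.

End NormalizedNormCompact.

Lemma lee_gt_EFin {R : realType} (x y : \bar R) :
  (forall s : R, (y < s%:E)%E -> (x <= s%:E)%E) -> (x <= y)%E.
Proof.
case: y => [y||] x_le.
- by apply/lee_addgt0Pr => e e_gt0; apply: x_le; rewrite lte_fin ltrDl.
- exact: leey.
- case: x x_le => [x||] // x_le.
    by have := x_le (x - 1) (ltNyr _); rewrite lee_fin => ?; exfalso; lra.
  by have := x_le 0 (ltNyr _).
Qed.

Section LipWidth.
Context {R : realType} {X : normedModType R} (K : set X) {gamma : R} {n : nat}.
Hypotheses (gamma_ge0 : 0 <= gamma) (n_gt0 : (0 < n)%N).

Lemma normalized_norm_le_fixed_lip_width {k} {N : 'rV[R]_k -> R} : (k <= n)%N -> is_norm N ->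
  exists2 N' : 'rV[R]_n -> R, normalized_norm N' &
    (fixed_lip_width K gamma N' <= fixed_lip_width K gamma N)%E.
Proof.
move=> kn hN; have [N1 hN1 N1_le] := fixed_lip_width_widen K gamma_ge0 N kn hN.
have [M Mu normalized_M] := auerbach hN1 n_gt0.
exists (fun y => N1 (y *m M)) => //; apply: le_trans N1_le.
apply: (fixed_lip_width_mulmx_le K gamma_ge0 N1 _ M hN1) => // z Bz.
by exists (z *m invmx M); rewrite /unit_ball /= mulmxKV.
Qed.

Lemma lip_width_le_fixed (N : 'rV[R]_n -> R) : is_norm N ->
  (lip_width K gamma n <= fixed_lip_width K gamma N)%E.
Proof. by move=> hN; apply: ereal_inf_lbound; exists n; split=> //; exists N. Qed.

Lemma exists_normalized_norm_lt s : (lip_width K gamma n < s)%E ->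
  exists N : 'rV[R]_n -> R, normalized_norm N /\ (fixed_lip_width K gamma N < s)%E.
Proof.
case/ereal_inf_lt => _ [k [_ kn [N [hN ->]]]] N_lt.
have [N' normalized_N' N'_le] := normalized_norm_le_fixed_lip_width kn hN.
by exists N'; split=> //; apply: le_lt_trans N_lt.
Qed.

Lemma exists_normalized_norm_optimal : exists N : 'rV[R]_n -> R, normalized_norm N /\
  (fixed_lip_width K gamma N <= lip_width K gamma n)%E.
Proof.
have [L_oo|L_lt_oo] := eqVneq (lip_width K gamma n) +oo%E.
  have hnorm : is_norm (fun y : 'rV[R]_n => `|y|).
    split=> [y|y|a y|y y'];
      [exact: normr_ge0 | exact: normr0_eq0 | exact: normrZ | exact: ler_normD].
  have [N normalized_N _] := normalized_norm_le_fixed_lip_width (leqnn n) hnorm.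
  by exists N; rewrite L_oo leey.
pose D := [set s | (lip_width K gamma n < s)%E].
pose B s := [set N : 'rV[R]_n -> R | normalized_norm N /\ (fixed_lip_width K gamma N < s)%E].
have F_filter : Filter (filter_from D B).
  apply: filter_from_filter; first by exists +oo%E; rewrite /D /= ltey.
  move=> s t Ds Dt; exists (Order.min s t); first by rewrite /D /= lt_min Ds Dt.
  by move=> N [hN]; rewrite lt_min => /andP[].
have F_proper : ProperFilter (filter_from D B).
  by apply: filter_from_proper => s /exists_normalized_norm_lt[N]; exists N.
have F_normalized : \forall N \near filter_from D B, normalized_norm N.
  by exists +oo%E; [rewrite /D /= ltey | move=> N []].
have [N [normalized_N N_cluster]] := normalized_norm_cluster F_proper F_normalized.
exists N; split=> //; apply: lee_gt_EFin => s Ls; apply/lee_addgt0Pr => e e_gt0.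
have [eta eta_gt0 width_le] := fixed_lip_width_le_close K gamma_ge0 _ e_gt0.
have F_Bs : filter_from D B (B s%:E) by exists s%:E.
have [N' [normalized_N' N'_lt] N_close] := N_cluster eta eta_gt0 _ F_Bs.
apply: le_trans (width_le _ _ _ normalized_N.1 normalized_N'.1 N_close) _.
by apply: leeD2r; apply: ltW.
Qed.

End LipWidth.

Theorem theorem3p3 (R : realType) (X : completeNormedModType R) (n : nat)
    (K : set X) (gamma : R) :
  (0 < n)%N -> compact K -> 0 < gamma ->
  exists N : 'rV[R]_n -> R,
    [/\ is_norm N,
        forall y : 'rV[R]_n,
          \big[Num.max/0]_(j < n) `|y ord0 j| <= N y /\
          N y <= \sum_(j < n) `|y ord0 j|
      & lip_width K gamma n = fixed_lip_width K gamma N].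
Proof.
move=> n_gt0 _ gamma_gt0.
have [N [[hN N_bounds] N_le]] := exists_normalized_norm_optimal K (ltW gamma_gt0) n_gt0.
exists N; split=> //; apply/le_anti/andP; split=> //.
exact: lip_width_le_fixed.
Qed.
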